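(* For any group $G$ the following conditions are equivalent: (i) $G$ is amenable; (ii) the comparison map $\iota^1: H^1(G;V)\to H^1_{(\infty)}(G;V)$ is injective for every dual normed $\mathbb{R}[G]$-module $V$; (iii) the comparison map $\iota^k: H^k(G;V)\to H^k_{(\infty)}(G;V)$ is injective for every dual normed $\mathbb{R}[G]$-module $V$ and every $k\in\mathbb{N}$.
   Context: A normed $\mathbb{R}[G]$-module is a normed real vector space $V$ on which $G$ acts on the left by linear isometries. For such $V$, $\ell^\infty(G,V)$ denotes the $\mathbb{R}[G]$-module of functions $f:G\to V$ with bounded image, with action $(g\cdot f)(h)=g\cdot (f(g^{-1}h))$. The $\ell^\infty$-cohomology of $G$ is $H^\bullet_{(\infty)}(G;V):=H^\bullet(G;\ell^\infty(G,V))$ (ordinary group cohomology with coefficients in the $\mathbb{R}[G]$-module $\ell^\infty(G,V)$). The comparison map $\iota^\bullet: H^\bullet(G;V)\to H^\bullet_{(\infty)}(G;V)$ is induced by the $G$-equivariant inclusion $\iota:V\to\ell^\infty(G,V)$ sending $v$ to the constant function with value $v$. A dual normed $\mathbb{R}[G]$-module is the topological dual $V=W'$ of a normed $\mathbb{R}[G]$-module $W$, with the operator norm and action $(g\cdot v)(w)=v(g^{-1}\cdot w)$. $G$ is amenable if there is a linear map $m:\ell^\infty(G,\mathbb{R})\to\mathbb{R}$ with $m(\text{constant } c)=c$, $m(f)\ge 0$ for $f\ge0$, and $m(g\cdot f)=m(f)$ for all $g,f$. *)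

From HB Require Import structures.
From mathcomp Require Import all_boot all_order all_algebra.
From mathcomp Require Import all_classical all_reals all_analysis.
Set Implicit Arguments. Unset Strict Implicit. Unset Printing Implicit Defensive.
Import Order.TTheory GRing.Theory Num.Theory.
Import numFieldNormedType.Exports.
Local Open Scope ring_scope.

(* Group cohomology H^k(G;M) via the standard inhomogeneous cochain    *)
(* complex.  The R[G]-module M is given as a subgroup [P] of an        *)
(* ambient abelian group [A] which is stable under an action [act].    *)
(* A k-cochain is a function on lists of length k of group elements    *)
(* (values on lists of other lengths are irrelevant).                  *)
Section Cohomology.
Variables (G : groupType) (A : zmodType) (act : G -> A -> A) (P : A -> Prop).

Fixpoint merge_at (i : nat) (s : seq G) : seq G :=
  match i, s with
  | 0%N, x :: y :: t => (x * y)%g :: t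
  | i'.+1, x :: t => x :: merge_at i' t
  | _, _ => s
  end.

Definition sgn (i : nat) (x : A) : A := if odd i then - x else x.

(* (df)(g1,...,g_{k+1}) = g1.f(g2,..,g_{k+1})
     + sum_{i=1}^{k} (-1)^i f(g1,..,g_i g_{i+1},..,g_{k+1})
     + (-1)^{k+1} f(g1,..,g_k)                                        *)
Definition coboundary_map (f : seq G -> A) (s : seq G) : A :=
  match s with
  | [::] => 0
  | g :: t =>
      act g (f t)
      + \sum_(i < (size s).-1) sgn i.+1 (f (merge_at i s))
      + sgn (size s) (f (take (size s).-1 s))
  end.

Definition is_cochain (k : nat) (f : seq G -> A) : Prop :=
  forall s, size s = k -> P (f s).

Definition is_cocycle (k : nat) (f : seq G -> A) : Prop :=
  is_cochain k f /\ forall s, size s = k.+1 -> coboundary_map f s = 0.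

Definition is_coboundary (k : nat) (f : seq G -> A) : Prop :=
  match k with
  | 0%N => forall s, size s = 0%N -> f s = 0
  | k'.+1 => exists b, is_cochain k' b /\
               forall s, size s = k -> f s = coboundary_map b s
  end.

End Cohomology.

(* The comparison map iota^k : H^k(G;M) -> H^k(G;N) induced by an
   equivariant map iota : A -> B (M inside A, N inside B) is injective *)
Definition comparison_injective (G : groupType) (A B : zmodType)
  (actA : G -> A -> A) (PA : A -> Prop) (actB : G -> B -> B) (PB : B -> Prop)
  (iota : A -> B) (k : nat) : Prop :=
  forall f : seq G -> A, is_cocycle actA PA k f ->
    is_coboundary actB PB k (iota \o f) -> is_coboundary actA PA k f.

(* normed R[G]-module: G acts on the normed space W by linear isometries *)
Definition isometric_linear_action (R : realType) (G : groupType)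
  (W : normedModType R) (rho : G -> W -> W) : Prop :=
  [/\ forall g (a : R) (w w' : W), rho g (a *: w + w') = a *: rho g w + rho g w',
      forall g (w : W), `|rho g w| = `|w|,
      forall w : W, rho 1%g w = w &
      forall g h (w : W), rho (g * h)%g w = rho g (rho h w)].

(* the topological dual W' : continuous linear functionals, seen inside W -> R *)
Definition in_dual (R : realType) (W : normedModType R) (v : W -> R) : Prop :=
  (forall (a : R) (w w' : W), v (a *: w + w') = a * v w + v w') /\ continuous v.

Definition dual_act (R : realType) (G : groupType) (W : normedModType R)
  (rho : G -> W -> W) (g : G) (v : W -> R) : W -> R :=
  fun w => v (rho (g^-1)%g w).

(* l^oo(G, W') inside G -> (W -> R): functions with values in W' whose
   operator norms are uniformly bounded *)
Definition in_linfty_dual (R : realType) (G : groupType) (W : normedModType R)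
  (f : G -> W -> R) : Prop :=
  (forall h, in_dual (f h)) /\
  exists C : R, forall h (w : W), `|f h w| <= C * `|w|.

Definition linfty_act (G : groupType) (V : Type) (actV : G -> V -> V)
  (g : G) (f : G -> V) : G -> V :=
  fun h => actV g (f ((g^-1) * h)%g).

(* iota : V -> l^oo(G,V), constant functions *)
Definition const_fun (G : groupType) (V : Type) (v : V) : G -> V := fun _ => v.

Definition dual_comparison_injective (R : realType) (G : groupType)
  (W : normedModType R) (rho : G -> W -> W) (k : nat) : Prop :=
  comparison_injective (dual_act rho) (@in_dual R W)
    (linfty_act (dual_act rho)) (@in_linfty_dual R G W)
    (@const_fun G (W -> R)) k.

Definition bounded_fun (R : realType) (G : Type) (f : G -> R) : Prop :=
  exists C : R, forall g, `|f g| <= C.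

Definition amenable (R : realType) (G : groupType) : Prop :=
  exists m : (G -> R) -> R,
    [/\ forall (a : R) (f f' : G -> R), bounded_fun f -> bounded_fun f' ->
          m (fun g => a * f g + f' g) = a * m f + m f',
        forall c : R, m (fun _ => c) = c,
        forall f : G -> R, bounded_fun f -> (forall g, 0 <= f g) -> 0 <= m f &
        forall (g : G) (f : G -> R), bounded_fun f ->
          m (fun h => f ((g^-1) * h)%g) = m f].

(* (i) => (iii).  An invariant mean m on l^oo(G) yields an averaging map
   l^oo(G, W') -> W', phi |-> (w |-> m (h |-> phi h w)), which is a left
   inverse of the inclusion of constants, is G-equivariant, and commutes with
   the coboundary.  Hence a cocycle with values in W' that bounds in
   l^oo(G, W') already bounds in W'.

   (ii) => (i).  Let W be the space of bounded functions G -> R vanishing at 1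
   with the oscillation norm (an isometric copy of l^oo(G)/R), acted on by
   renormalised left translation.  The evaluation cocycle g |-> ev_g in W'
   becomes a coboundary in l^oo(G, W'); injectivity of iota^1 gives v in W'
   with ev_g = g.v - v.  Then mu f = f 1 - v (f - f 1) is a bounded, invariant,
   normalised linear functional on l^oo(G), and its positive part
   mu^+ f = sup { mu g | 0 <= g <= f }, extended linearly and normalised, is
   an invariant mean.

   (iii) => (ii) is the case k = 1. *)
From Pilot Require Import Defs.
From HB Require Import structures.
From mathcomp Require Import all_boot all_order all_algebra.
From mathcomp Require Import all_classical all_reals all_analysis.
From mathcomp Require Import ring lra.
(* Imported again so that [bounded_fun] of Defs shadows the homonymous notion
   of mathcomp-analysis. *)
From Pilot Require Import Defs.
Set Implicit Arguments. Unset Strict Implicit. Unset Printing Implicit Defensive.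
Import Order.TTheory GRing.Theory Num.Theory.
Import numFieldNormedType.Exports.
Local Open Scope ring_scope.

Section LinearFunctional.
Variables (R : realType) (W : normedModType R) (v : W -> R).
Hypothesis v_linear : forall (a : R) (w w' : W), v (a *: w + w') = a * v w + v w'.

Lemma functional0 : v 0 = 0.
Proof.
have := v_linear 1 0 0; rewrite scale1r addr0 mul1r => h.
by apply: (addrI (v 0)); rewrite addr0 -h.
Qed.

Lemma functionalB x y : v (x - y) = v x - v y.
Proof. by rewrite -[x - y]addrC -scaleN1r v_linear mulN1r addrC. Qed.

Lemma functionalZ a x : v (a *: x) = a * v x.
Proof. by rewrite -[a *: x]addr0 v_linear functional0 addr0. Qed.

Lemma bounded_functional_continuous C :
  (forall w, `|v w| <= C * `|w|) -> continuous v.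
Proof.
move=> hC x; apply/cvgrPdist_lt => e e0; apply/nbhs_normP.
have C1 : 0 < `|C| + 1 by rewrite ltr_pwDr // normr_ge0.
exists (e / (`|C| + 1)); first by rewrite /= divr_gt0.
move=> y /= xy; rewrite -functionalB; apply: le_lt_trans (hC _) _.
apply: le_lt_trans (_ : _ <= (`|C| + 1) * `|x - y|) _.
  by apply: ler_wpM2r; [exact: normr_ge0 | rewrite ler_wpDr // ler_norm].
by rewrite mulrC -ltr_pdivlMr.
Qed.

Lemma continuous_functional_bounded :
  continuous v -> exists K, forall w, `|v w| <= K * `|w|.
Proof.
move=> /(_ 0) /cvgrPdist_lt /(_ 1 ltr01) /nbhs_normP [r /= r0 hr].
exists (2 / r) => w; have [->|w0] := eqVneq w 0.
  by rewrite functional0 !normr0 mulr0.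
have nw : 0 < `|w| by rewrite normr_gt0.
have k0 : 0 < r / 2 / `|w| by rewrite !divr_gt0.
have /hr : `|0 - (r / 2 / `|w|) *: w| < r.
  rewrite sub0r normrN normrZ gtr0_norm // divfK ?gt_eqF //.
  by rewrite ltr_pdivrMr // ltr_pMr // ltr1n.
rewrite functional0 sub0r normrN functionalZ normrM gtr0_norm //.
have e : (r / 2 / `|w|)^-1 = 2 / r * `|w| by field; rewrite !gt_eqF.
by rewrite -e -ltr_pdivlMl // mulr1 => /ltW.
Qed.
End LinearFunctional.

Section BoundedFunctions.
Variables (R : realType) (T : Type).
Implicit Types (f g : T -> R).

Lemma bounded_cst (c : R) : bounded_fun (fun _ : T => c).
Proof. by exists `|c| => _. Qed.

Lemma bounded_lin (a : R) f g : bounded_fun f -> bounded_fun g ->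
  bounded_fun (fun x => a * f x + g x).
Proof.
move=> [C hC] [D hD]; exists (`|a| * C + D) => x.
by apply: le_trans (ler_normD _ _) _; rewrite normrM lerD ?ler_wpM2l.
Qed.

Lemma boundedZ (a : R) f : bounded_fun f -> bounded_fun (fun x => a * f x).
Proof.
by move=> /(bounded_lin a)/(_ (bounded_cst 0)); under eq_fun do rewrite addr0.
Qed.

Lemma boundedD f g : bounded_fun f -> bounded_fun g ->
  bounded_fun (fun x => f x + g x).
Proof. by move=> hf /(bounded_lin 1 hf); under eq_fun do rewrite mul1r. Qed.

Lemma boundedN f : bounded_fun f -> bounded_fun (fun x => - f x).
Proof. by move=> /(boundedZ (-1)); under eq_fun do rewrite mulN1r. Qed.

Lemma bounded_comp (S : Type) (phi : S -> T) f :
  bounded_fun f -> bounded_fun (f \o phi).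
Proof. by move=> [C hC]; exists C => x; exact: hC. Qed.
End BoundedFunctions.

Section LinearMeans.
Variables (R : realType) (T : Type) (m : (T -> R) -> R).
Hypothesis m_linear : forall (a : R) (f f' : T -> R),
  bounded_fun f -> bounded_fun f' -> m (fun x => a * f x + f' x) = a * m f + m f'.
Hypothesis m_const : forall c : R, m (fun _ => c) = c.

Lemma meanD f f' : bounded_fun f -> bounded_fun f' ->
  m (fun x => f x + f' x) = m f + m f'.
Proof. by move=> hf /(m_linear 1 hf); under eq_fun do rewrite mul1r; rewrite mul1r. Qed.

Lemma meanZ a f : bounded_fun f -> m (fun x => a * f x) = a * m f.
Proof.
move=> hf; rewrite -[RHS]addr0 -(m_const 0) -m_linear //; last exact: bounded_cst.
by congr m; apply/funext => x; rewrite addr0.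
Qed.

Lemma mean_sgn j f : bounded_fun f -> m (fun x => sgn j (f x)) = sgn j (m f).
Proof.
rewrite /sgn; case: (odd j) => // hf.
by rewrite -mulN1r -meanZ //; congr m; apply/funext => x; rewrite mulN1r.
Qed.

Lemma mean_sum (I : Type) (r : seq I) (F : I -> T -> R) :
  (forall i, bounded_fun (F i)) ->
  m (fun x => \sum_(i <- r) F i x) = \sum_(i <- r) m (F i).
Proof.
move=> hF; suff : bounded_fun (fun x => \sum_(i <- r) F i x) /\
    m (fun x => \sum_(i <- r) F i x) = \sum_(i <- r) m (F i) by case.
elim: r => [|i r [IHb IHm]].
  under eq_fun do rewrite big_nil.
  by rewrite big_nil m_const; split; first exact: bounded_cst.
under eq_fun do rewrite big_cons; rewrite big_cons.
by split; [exact: boundedD | rewrite meanD // IHm].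
Qed.

Hypothesis m_pos : forall f, bounded_fun f -> (forall x, 0 <= f x) -> 0 <= m f.

Lemma mean_norm_le f (B : R) : (forall x, `|f x| <= B) -> `|m f| <= B.
Proof.
move=> hB; have hf : bounded_fun f by exists B.
have hfB x : - B <= f x <= B by rewrite -ler_norml.
have hcB := bounded_cst T B.
have lo : 0 <= m f + B.
  rewrite -[B in _ + B](m_const B) -meanD //.
  by apply: m_pos => [|x]; [exact: boundedD | case/andP: (hfB x); lra].
have hi : 0 <= -1 * m f + B.
  rewrite -[B in _ + B](m_const B) -m_linear //.
  by apply: m_pos => [|x]; [exact: bounded_lin | case/andP: (hfB x); lra].
by rewrite ler_norml; apply/andP; split; lra.
Qed.
End LinearMeans.

Lemma size_merge_at (G : groupType) i (s : seq G) : (i < (size s).-1)%N ->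
  size (merge_at i s) = (size s).-1.
Proof. by elim: s i => [|x [|y t] IH] [|i] //= hi; rewrite IH. Qed.

Section Averaging.
Variables (R : realType) (G : groupType) (m : (G -> R) -> R).
Hypothesis m_linear : forall (a : R) (f f' : G -> R),
  bounded_fun f -> bounded_fun f' -> m (fun x => a * f x + f' x) = a * m f + m f'.
Hypothesis m_const : forall c : R, m (fun _ => c) = c.
Hypothesis m_pos : forall f, bounded_fun f -> (forall x, 0 <= f x) -> 0 <= m f.
Hypothesis m_inv : forall (g : G) (f : G -> R), bounded_fun f ->
  m (fun h => f ((g^-1) * h)%g) = m f.
Variables (W : normedModType R) (rho : G -> W -> W).

Definition average (phi : G -> W -> R) : W -> R := fun w => m (fun h => phi h w).

(* the averaging map is defined, linear and equivariant on functions all of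
   whose evaluations are bounded *)
Definition pointwise_bounded (phi : G -> W -> R) :=
  forall w, bounded_fun (fun h => phi h w).

Lemma linfty_pointwise_bounded phi : in_linfty_dual phi -> pointwise_bounded phi.
Proof. by move=> [_ [C hC]] w; exists (C * `|w|). Qed.

Lemma pointwise_boundedD phi psi : pointwise_bounded phi ->
  pointwise_bounded psi -> pointwise_bounded (phi + psi).
Proof. by move=> hphi hpsi w; exact: boundedD. Qed.

Lemma pointwise_bounded_sgn j phi : pointwise_bounded phi ->
  pointwise_bounded (sgn j phi).
Proof. by rewrite /sgn; case: (odd j) => // hphi w; exact: boundedN. Qed.

Lemma pointwise_bounded_sum (I : Type) (r : seq I) (F : I -> G -> W -> R) :
  (forall i, pointwise_bounded (F i)) -> pointwise_bounded (\sum_(i <- r) F i).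
Proof.
move=> hF w; under eq_fun do rewrite !fct_sumE.
elim: r => [|i r IH]; first by under eq_fun do rewrite big_nil; exact: bounded_cst.
by under eq_fun do rewrite big_cons; exact: boundedD (hF i w) IH.
Qed.

Lemma pointwise_bounded_act g phi : pointwise_bounded phi ->
  pointwise_bounded (linfty_act (dual_act rho) g phi).
Proof. by move=> hphi w; exact: bounded_comp (hphi _). Qed.

Lemma averageD phi psi : pointwise_bounded phi -> pointwise_bounded psi ->
  average (phi + psi) = average phi + average psi.
Proof. by move=> hphi hpsi; apply/funext => w; exact: meanD. Qed.

Lemma average_sgn j phi : pointwise_bounded phi ->
  average (sgn j phi) = sgn j (average phi).
Proof.
move=> hphi; apply/funext => w; rewrite /average /sgn.
by case: (odd j) => //=; exact: (mean_sgn m_linear m_const 1).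
Qed.

Lemma average_sum (I : Type) (r : seq I) (F : I -> G -> W -> R) :
  (forall i, pointwise_bounded (F i)) ->
  average (\sum_(i <- r) F i) = \sum_(i <- r) average (F i).
Proof.
move=> hF; apply/funext => w; rewrite /average fct_sumE.
under eq_fun do rewrite fct_sumE.
by rewrite fct_sumE; exact: (mean_sum m_linear m_const _ (fun i => hF i w)).
Qed.

Lemma average_act g phi : pointwise_bounded phi ->
  average (linfty_act (dual_act rho) g phi) = dual_act rho g (average phi).
Proof. by move=> hphi; apply/funext => w; exact: m_inv. Qed.

Lemma average_const (v : W -> R) : average (@const_fun G _ v) = v.
Proof. by apply/funext => w; exact: m_const. Qed.

Lemma average_dual phi : in_linfty_dual phi -> in_dual (average phi).
Proof.
move=> hphi; have hb := linfty_pointwise_bounded hphi.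
have lin (a : R) w w' : average phi (a *: w + w') = a * average phi w + average phi w'.
  rewrite /average -m_linear //; congr m; apply/funext => h.
  by case: (hphi.1 h) => ->.
split => //; case: hphi => _ [C hC].
apply: (bounded_functional_continuous lin (C := C)) => w.
exact: mean_norm_le.
Qed.

Lemma average_coboundary k (b : seq G -> G -> W -> R) s :
  (forall t, size t = k -> pointwise_bounded (b t)) -> size s = k.+1 ->
  average (coboundary_map (linfty_act (dual_act rho)) b s) =
  coboundary_map (dual_act rho) (average \o b) s.
Proof.
case: s => [|g t] // hb [ht].
have hmerge (i : 'I_(size t)) : pointwise_bounded (b (merge_at i (g :: t))).
  by apply: hb; rewrite size_merge_at.
have htake : pointwise_bounded (b (take (size t) (g :: t))).
  by apply: hb; rewrite size_takel //= leqnSn.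
have hsum : pointwise_bounded
    (\sum_(i < size t) sgn i.+1 (b (merge_at i (g :: t)))).
  by apply: pointwise_bounded_sum => i; exact: pointwise_bounded_sgn.
have hbt : pointwise_bounded (b t) by exact: hb.
have hact := pointwise_bounded_act g hbt.
rewrite /coboundary_map /= averageD ?averageD ?average_act ?average_sgn //;
  last 2 first.
- exact: pointwise_boundedD.
- exact: pointwise_bounded_sgn.
rewrite average_sum => [|i]; last exact: pointwise_bounded_sgn.
by congr (_ + _ + _); apply: eq_bigr => i _; rewrite average_sgn.
Qed.

(* a primitive b in l^oo(G, W') averages to a primitive in W' *)
Lemma averaging_comparison_injective k : dual_comparison_injective rho k.
Proof.
case: k => [|k] f [_ _] /=.
  by move=> hcob s /hcob /(congr1 (fun F => F 1%g)).
case=> b [hbc hbe]; exists (average \o b); split.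
  by move=> t ht; apply: average_dual; exact: hbc.
move=> s hs; rewrite -(average_coboundary (k := k)) ?hs //.
  by rewrite -hbe // average_const.
by move=> t /hbc /linfty_pointwise_bounded.
Qed.
End Averaging.

Lemma amenable_comparison_injective (R : realType) (G : groupType) :
  amenable R G -> forall (W : normedModType R) (rho : G -> W -> W) k,
  dual_comparison_injective rho k.
Proof.
case=> m [hlin hc hpos hinv] W rho k.
exact: averaging_comparison_injective hlin hc hpos hinv _ _ _.
Qed.

(* The oscillation sup_{x,y} |f x - f y| of a bounded function on G; it is
   the quotient norm of l^oo(G)/R. *)
Section Oscillation.
Variables (R : realType) (G : groupType).

Definition osc (f : G -> R) : R :=
  sup [set `|f x - f y| | x in setT & y in setT]%classic.

Lemma osc_ub (f : G -> R) x y : bounded_fun f -> `|f x - f y| <= osc f.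
Proof.
move=> [C hC]; apply: ub_le_sup; last by exists x => //; exists y.
exists (C + C) => _ [a _ [b _ <-]].
by apply: le_trans (ler_normB _ _) _; apply: lerD.
Qed.

Lemma osc_le (f : G -> R) B : (forall x y, `|f x - f y| <= B) -> osc f <= B.
Proof.
move=> hB; apply: ge_sup; last by move=> _ [a _ [b _ <-]].
by exists `|f 1%g - f 1%g|; exists 1%g => //; exists 1%g.
Qed.
End Oscillation.

Section PinnedFunctions.
Variables (R : realType) (G : groupType).

Record pinned := Pinned {
  pinned_fun :> G -> R;
  pinned_prop : bounded_fun pinned_fun /\ pinned_fun 1%g = 0 }.

Lemma pinned_eq (x y : pinned) : pinned_fun x = pinned_fun y -> x = y.
Proof.
by case: x y => f p [g q] /= e; subst g; congr Pinned; exact: Prop_irrelevance.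
Qed.

HB.instance Definition _ := gen_eqMixin pinned.
HB.instance Definition _ := gen_choiceMixin pinned.

Lemma pinned_bounded (x : pinned) : bounded_fun x. Proof. by case: x => f []. Qed.
Lemma pinned1 (x : pinned) : x 1%g = 0. Proof. by case: x => f []. Qed.

Lemma pinned_zeroP : bounded_fun (fun _ : G => 0 : R) /\ 0 = 0 :> R.
Proof. by split => //; exact: bounded_cst. Qed.
Lemma pinned_addP (x y : pinned) :
  bounded_fun (fun g => x g + y g) /\ x 1%g + y 1%g = 0.
Proof.
by rewrite !pinned1 addr0; split => //; apply: boundedD; exact: pinned_bounded.
Qed.
Lemma pinned_scaleP (a : R) (x : pinned) :
  bounded_fun (fun g => a * x g) /\ a * x 1%g = 0.
Proof. by rewrite pinned1 mulr0; split => //; apply: boundedZ; exact: pinned_bounded. Qed.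

Definition pinned_zero := Pinned pinned_zeroP.
Definition pinned_add x y := Pinned (pinned_addP x y).
Definition pinned_scale a x := Pinned (pinned_scaleP a x).
Definition pinned_opp x := pinned_scale (-1) x.

Lemma pinned_addA : associative pinned_add.
Proof. by move=> x y z; apply/pinned_eq/funext => g /=; rewrite addrA. Qed.
Lemma pinned_addC : commutative pinned_add.
Proof. by move=> x y; apply/pinned_eq/funext => g /=; rewrite addrC. Qed.
Lemma pinned_add0 : left_id pinned_zero pinned_add.
Proof. by move=> x; apply/pinned_eq/funext => g /=; rewrite add0r. Qed.
Lemma pinned_addN : left_inverse pinned_zero pinned_opp pinned_add.
Proof. by move=> x; apply/pinned_eq/funext => g /=; rewrite mulN1r addNr. Qed.

HB.instance Definition _ :=
  GRing.isZmodule.Build pinned pinned_addA pinned_addC pinned_add0 pinned_addN.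

Lemma pinned_scaleA a b x : pinned_scale a (pinned_scale b x) = pinned_scale (a * b) x.
Proof. by apply/pinned_eq/funext => g /=; rewrite mulrA. Qed.
Lemma pinned_scale1 : left_id 1 pinned_scale.
Proof. by move=> x; apply/pinned_eq/funext => g /=; rewrite mul1r. Qed.
Lemma pinned_scaleDr : right_distributive pinned_scale +%R.
Proof. by move=> a x y; apply/pinned_eq/funext => g /=; rewrite mulrDr. Qed.
Lemma pinned_scaleDl x : {morph pinned_scale^~ x : a b / a + b}.
Proof. by move=> a b; apply/pinned_eq/funext => g /=; rewrite mulrDl. Qed.

HB.instance Definition _ := GRing.Zmodule_isLmodule.Build R pinned
  pinned_scaleA pinned_scale1 pinned_scaleDr pinned_scaleDl.

Lemma pinnedD (x y : pinned) g : (x + y) g = x g + y g. Proof. by []. Qed.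
Lemma pinnedZ a (x : pinned) g : (a *: x) g = a * x g. Proof. by []. Qed.

Definition pinned_norm (x : pinned) := osc x.

Lemma pinned_norm_ub (x : pinned) a b : `|x a - x b| <= pinned_norm x.
Proof. exact/osc_ub/pinned_bounded. Qed.

Lemma pinned_norm_ge0 (x : pinned) : 0 <= pinned_norm x.
Proof. exact: le_trans (pinned_norm_ub x 1 1). Qed.

Lemma pinned_normD x y : pinned_norm (x + y) <= pinned_norm x + pinned_norm y.
Proof.
apply: osc_le => a b; rewrite !pinnedD opprD addrACA.
by apply: le_trans (ler_normD _ _) _; apply: lerD; exact: pinned_norm_ub.
Qed.

Lemma pinned_normZ (l : R) (x : pinned) : pinned_norm (l *: x) = `|l| * pinned_norm x.
Proof.
apply/eqP; rewrite eq_le; apply/andP; split.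
  apply: osc_le => a b; rewrite !pinnedZ -mulrBr normrM.
  by apply: ler_wpM2l => //; exact: pinned_norm_ub.
have [->|l0] := eqVneq l 0; first by rewrite normr0 mul0r pinned_norm_ge0.
rewrite -ler_pdivlMl ?normr_gt0 //; apply: osc_le => a b.
by rewrite ler_pdivlMl ?normr_gt0 // -normrM mulrBr -!pinnedZ; exact: pinned_norm_ub.
Qed.

Lemma pinned_norm_eq0 (x : pinned) : pinned_norm x = 0 -> x = 0.
Proof.
move=> x0; apply/pinned_eq/funext => g /=; apply/eqP.
by rewrite -normr_le0 -x0 -[x g]subr0 -(pinned1 x) pinned_norm_ub.
Qed.

HB.instance Definition _ :=
  Lmodule_isNormed.Build R pinned pinned_normD pinned_normZ pinned_norm_eq0.

Lemma pinned_eval_le (x : pinned) g : `|x g| <= `|x|.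
Proof. by rewrite -[x g]subr0 -(pinned1 x); exact: pinned_norm_ub. Qed.

Lemma translateP (g : G) (x : pinned) :
  bounded_fun (fun h => x (g^-1 * h)%g - x g^-1%g) /\
  x (g^-1 * 1)%g - x g^-1%g = 0.
Proof.
rewrite mulg1 subrr; split => //; apply: boundedD; last exact: bounded_cst.
exact: bounded_comp (pinned_bounded x).
Qed.

Definition translate g x : pinned := Pinned (translateP g x).

Lemma translateE g (x : pinned) h : translate g x h = x (g^-1 * h)%g - x g^-1%g.
Proof. by []. Qed.

Lemma translate_isometric : isometric_linear_action translate.
Proof.
split.
- by move=> g a x y; apply/pinned_eq/funext => h /=; ring.
- move=> g x; apply/eqP; rewrite eq_le; apply/andP; split.
    apply: osc_le => a b; rewrite !translateE.
    have -> : x (g^-1 * a)%g - x g^-1%g - (x (g^-1 * b)%g - x g^-1%g) =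
      x (g^-1 * a)%g - x (g^-1 * b)%g by ring.
    exact: pinned_norm_ub.
  apply: osc_le => a b.
  have -> : x a - x b = translate g x (g * a)%g - translate g x (g * b)%g.
    by rewrite !translateE !mulKg; ring.
  exact: pinned_norm_ub.
- by move=> x; apply/pinned_eq/funext => h /=; rewrite invg1 mul1g pinned1 subr0.
- by move=> g h x; apply/pinned_eq/funext => y /=; rewrite invgM !mulgA; ring.
Qed.
End PinnedFunctions.

Section EvaluationCocycle.
Variables (R : realType) (G : groupType).
Local Notation W := (pinned R G).

Lemma evaluation_dual g : in_dual (fun w : W => w g).
Proof.
split => //; apply: (@bounded_functional_continuous _ _ _ _ 1) => // w.
by rewrite mul1r; exact: pinned_eval_le.
Qed.

Definition evaluation_cocycle (s : seq G) : W -> R := fun w => w (head 1%g s).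

Lemma evaluation_is_cocycle :
  is_cocycle (dual_act (@translate R G)) (@in_dual R W) 1 evaluation_cocycle.
Proof.
split; first by move=> [|g [|? ?]] // _; exact: evaluation_dual.
move=> [|g [|h [|? ?]]] // _; apply/funext => w.
rewrite /coboundary_map /= big_ord1 /= /sgn /= !addrfctE /dual_act /= invgK.
by change (w (g * h)%g - w g + - w (g * h)%g + w g = 0); ring.
Qed.

(* the primitive h |-> -ev_h lies in l^oo(G, W') *)
Lemma negated_evaluation_linfty : in_linfty_dual (fun h (w : W) => - w h).
Proof.
have hb h (w : W) : `|- w h| <= 1 * `|w| by rewrite normrN mul1r pinned_eval_le.
split; last by exists 1.
move=> h; have lin (a : R) (w w' : W) : - (a *: w + w') h = a * - w h + - w' h.
  by rewrite pinnedD pinnedZ; ring.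
split => //.
exact: (@bounded_functional_continuous _ _ (fun w : W => - w h) lin 1 (hb h)).
Qed.

Lemma evaluation_bounded_coboundary :
  is_coboundary (linfty_act (dual_act (@translate R G))) (@in_linfty_dual R G W) 1
    (@const_fun G (W -> R) \o evaluation_cocycle).
Proof.
exists (fun _ h (w : W) => - w h); split => [t _|].
  exact: negated_evaluation_linfty.
move=> [|g [|? ?]] // _; apply/funext => h; apply/funext => w.
rewrite /coboundary_map /= big_ord0 /sgn /=.
change (w g = - translate g^-1 w (g^-1 * h)%g + 0 - - w h).
by rewrite translateE invgK mulVKg; ring.
Qed.

Lemma evaluation_coboundary :
  dual_comparison_injective (@translate R G) 1 ->
  exists2 v : W -> R, in_dual v & forall g (w : W), w g = v (translate g^-1 w) - v w.
Proof.
move=> /(_ _ evaluation_is_cocycle evaluation_bounded_coboundary) [b [hb hbe]].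
exists (b [::]); first exact: hb.
move=> g w; have /(congr1 (fun F => F w)) := hbe [:: g] erefl.
by rewrite /coboundary_map /= big_ord0 /sgn /= [_ w]/= addr0.
Qed.
End EvaluationCocycle.

Section InvariantFunctional.
Variables (R : realType) (G : groupType) (v : pinned R G -> R).
Hypothesis v_dual : in_dual v.
Hypothesis v_primitive : forall g (w : pinned R G), w g = v (translate g^-1 w) - v w.

(* f - f 1, as an element of W (0 if f is unbounded) *)
Lemma pin_at1P (f : G -> R) (hf : bounded_fun f) :
  bounded_fun (fun x => f x - f 1%g) /\ f 1%g - f 1%g = 0.
Proof. by rewrite subrr; split => //; apply: boundedD hf _; exact: bounded_cst. Qed.

Definition pin_at1 (f : G -> R) : pinned R G :=
  if pselect (bounded_fun f) is left hf then Pinned (pin_at1P hf) else 0.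

Lemma pin_at1E f : bounded_fun f -> forall x, pin_at1 f x = f x - f 1%g.
Proof. by rewrite /pin_at1; case: pselect. Qed.

Definition invariant_functional (f : G -> R) := f 1%g - v (pin_at1 f).

Lemma v_linear (a : R) w w' : v (a *: w + w') = a * v w + v w'.
Proof. exact: v_dual.1. Qed.

Lemma invariant_functional_linear (a : R) (f f' : G -> R) :
  bounded_fun f -> bounded_fun f' ->
  invariant_functional (fun g => a * f g + f' g) =
  a * invariant_functional f + invariant_functional f'.
Proof.
move=> hf hf'; rewrite /invariant_functional.
have -> : pin_at1 (fun g => a * f g + f' g) = a *: pin_at1 f + pin_at1 f'.
  apply/pinned_eq/funext => x.
  by rewrite pinnedD pinnedZ !pin_at1E //; [ring | exact: bounded_lin].
by rewrite v_linear; ring.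
Qed.

Lemma invariant_functional_const c : invariant_functional (fun _ => c) = c.
Proof.
rewrite /invariant_functional.
have -> : pin_at1 (fun _ => c) = 0.
  by apply/pinned_eq/funext => x; rewrite pin_at1E ?subrr //; exact: bounded_cst.
by rewrite (functional0 v_linear) subr0.
Qed.

Lemma invariant_functional_inv (g : G) (f : G -> R) : bounded_fun f ->
  invariant_functional (fun h => f (g^-1 * h)%g) = invariant_functional f.
Proof.
move=> hf; have hft := bounded_comp (fun h => (g^-1 * h)%g) hf.
rewrite /invariant_functional mulg1.
have -> : pin_at1 (fun h => f (g^-1 * h)%g) = translate g (pin_at1 f).
  by apply/pinned_eq/funext => x; rewrite translateE !pin_at1E // mulg1; ring.
have := v_primitive g^-1%g (pin_at1 f); rewrite invgK pin_at1E // => e.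
lra.
Qed.

Lemma invariant_functional_bounded : exists K, forall f C,
  (forall x, `|f x| <= C) -> `|invariant_functional f| <= K * C.
Proof.
have [K hK] := continuous_functional_bounded v_linear v_dual.2.
exists (1 + 2 * `|K|) => f C hC; have hf : bounded_fun f by exists C.
have hw : `|pin_at1 f| <= 2 * C.
  apply: osc_le => a b; rewrite !pin_at1E //.
  have -> : f a - f 1%g - (f b - f 1%g) = f a - f b by ring.
  by apply: le_trans (ler_normB _ _) _; rewrite mulr2n mulrDl mul1r lerD.
have hv : `|v (pin_at1 f)| <= `|K| * (2 * C).
  apply: le_trans (hK _) _; apply: le_trans (ler_wpM2r _ (ler_norm K)) _.
    exact: normr_ge0.
  by apply: ler_wpM2l.
rewrite /invariant_functional; apply: le_trans (ler_normB _ _) _.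
by have := hC 1%g; lra.
Qed.
End InvariantFunctional.

Section Minorants.
Variables (R : realType) (T : Type).

Definition nonneg_bounded (f : T -> R) := bounded_fun f /\ forall x, 0 <= f x.

Definition minorant (f g : T -> R) := bounded_fun g /\ forall x, 0 <= g x <= f x.

Lemma minorant0 f : (forall x, 0 <= f x) -> minorant f (fun _ => 0).
Proof. by move=> hf; split => [|x]; [exact: bounded_cst | rewrite lexx hf]. Qed.

Lemma nonneg_boundedD f g : nonneg_bounded f -> nonneg_bounded g ->
  nonneg_bounded (fun x => f x + g x).
Proof. by case=> bf pf [bg pg]; split => [|x]; [exact: boundedD | rewrite addr_ge0]. Qed.

Lemma nonneg_boundedZ (a : R) f : 0 <= a -> nonneg_bounded f ->
  nonneg_bounded (fun x => a * f x).
Proof. by move=> a0 [bf pf]; split => [|x]; [exact: boundedZ | rewrite mulr_ge0]. Qed.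

Lemma nonneg_bounded_shift f (c : R) : bounded_fun f -> (forall x, 0 <= f x + c) ->
  nonneg_bounded (fun x => f x + c).
Proof. by move=> bf hc; split => //; apply: boundedD bf _; exact: bounded_cst. Qed.

(* Riesz decomposition: a minorant g of f1 + f2 is the sum of the minorant
   min(g, f1) of f1 and the minorant g - min(g, f1) of f2. *)
Lemma riesz_decomposition f1 f2 g :
  (forall x, 0 <= f1 x) -> (forall x, 0 <= f2 x) ->
  minorant (fun x => f1 x + f2 x) g ->
  exists2 g1, minorant f1 g1 & minorant f2 (fun x => g x - g1 x).
Proof.
move=> p1 p2 [bg hg]; pose g1 x := Num.min (g x) (f1 x).
have hg1 x : [/\ 0 <= g1 x, g1 x <= g x, g1 x <= f1 x & g x - g1 x <= f2 x].
  have := p1 x; have := p2 x; case/andP: (hg x) => g0 gf.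
  by rewrite /g1; have [gf1|/ltW f1g] := leP (g x) (f1 x); split; lra.
have bg1 : bounded_fun g1.
  case: bg => C hC; exists C => x; apply: le_trans (hC x).
  by have [g10 g1g _ _] := hg1 x; rewrite !ger0_norm //; lra.
exists g1; first by split => // x; have [-> _ -> _] := hg1 x.
split => [|x]; first by apply: boundedD bg _; exact: boundedN.
by have [_ g1g _ ->] := hg1 x; rewrite subr_ge0 g1g.
Qed.
End Minorants.

Section PositivePart.
Variables (R : realType) (G : groupType) (mu : (G -> R) -> R).
Hypothesis mu_linear : forall (a : R) (f f' : G -> R), bounded_fun f ->
  bounded_fun f' -> mu (fun g => a * f g + f' g) = a * mu f + mu f'.
Hypothesis mu_const : forall c : R, mu (fun _ => c) = c.
Hypothesis mu_inv : forall (g : G) (f : G -> R), bounded_fun f ->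
  mu (fun h => f ((g^-1) * h)%g) = mu f.
Variable K : R.
Hypothesis mu_bounded : forall f C, (forall x, `|f x| <= C) -> `|mu f| <= K * C.

Definition pos_part (f : G -> R) : R := sup [set mu g | g in minorant f]%classic.

Lemma pos_part_ub f g : bounded_fun f -> minorant f g -> mu g <= pos_part f.
Proof.
move=> [C hC] hg; apply: ub_le_sup; last by exists g.
exists (K * C) => _ [u [_ hu] <-]; apply: le_trans (ler_norm _) _.
apply: mu_bounded => x; case/andP: (hu x) => u0 uf.
by rewrite ger0_norm //; apply: le_trans uf (le_trans (ler_norm _) (hC x)).
Qed.

Lemma pos_part_le f B : (forall x, 0 <= f x) ->
  (forall g, minorant f g -> mu g <= B) -> pos_part f <= B.
Proof.
move=> hf hB; apply: ge_sup; last by move=> _ [g hg <-]; exact: hB.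
by exists (mu (fun _ => 0)), (fun _ => 0); first exact: minorant0.
Qed.

Lemma pos_part_ge0 f : nonneg_bounded f -> 0 <= pos_part f.
Proof.
by case=> bf pf; rewrite -(mu_const 0); apply: pos_part_ub => //; exact: minorant0.
Qed.

Lemma pos_partD f1 f2 : nonneg_bounded f1 -> nonneg_bounded f2 ->
  pos_part (fun x => f1 x + f2 x) = pos_part f1 + pos_part f2.
Proof.
move=> n1 n2; have [b12 p12] := nonneg_boundedD n1 n2.
case: n1 n2 => [b1 p1] [b2 p2]; apply/eqP; rewrite eq_le; apply/andP; split.
  apply: pos_part_le => // g /(riesz_decomposition p1 p2) [g1 hg1 hg2].
  have -> : mu g = mu g1 + mu (fun x => g x - g1 x).
    rewrite -(meanD mu_linear); [|exact: hg1.1|exact: hg2.1].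
    by congr mu; apply/funext => x; rewrite addrC subrK.
  by apply: lerD; apply: pos_part_ub.
rewrite -lerBrDr; apply: pos_part_le => // g1 [bg1 hg1].
rewrite lerBrDr addrC -lerBrDr; apply: pos_part_le => // g2 [bg2 hg2].
rewrite lerBrDr addrC -(meanD mu_linear) //; apply: pos_part_ub => //; split => [|x].
  exact: boundedD.
by case/andP: (hg1 x) => ? ?; case/andP: (hg2 x) => ? ?; rewrite addr_ge0 ?lerD.
Qed.

Lemma pos_partZ (a : R) f : 0 < a -> nonneg_bounded f ->
  pos_part (fun x => a * f x) = a * pos_part f.
Proof.
move=> a0 nf; have [baf paf] := nonneg_boundedZ (ltW a0) nf.
case: nf => bf pf; apply/eqP; rewrite eq_le; apply/andP; split.
  apply: pos_part_le => // g [bg hg].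
  have -> : g = (fun x => a * (a^-1 * g x)).
    by apply/funext => x; rewrite mulrA mulfV ?gt_eqF // mul1r.
  rewrite (meanZ mu_linear mu_const) //; last exact: boundedZ.
  rewrite ler_pM2l //; apply: pos_part_ub => //; split => [|x]; first exact: boundedZ.
  case/andP: (hg x) => g0 gf.
  have ai0 : 0 <= a^-1 by rewrite invr_ge0 ltW.
  by rewrite mulr_ge0 //= ler_pdivrMl.
rewrite -ler_pdivlMl //; apply: pos_part_le => // g [bg hg].
rewrite ler_pdivlMl // -(meanZ mu_linear mu_const) //.
apply: pos_part_ub => //; split => [|x].
  exact: boundedZ.
by case/andP: (hg x) => g0 gf; rewrite mulr_ge0 ?(ltW a0) //= ler_pM2l.
Qed.

Lemma pos_part0 : pos_part (fun _ => 0) = 0.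
Proof.
apply/eqP; rewrite eq_le pos_part_ge0 ?andbT; last by split => //; exact: bounded_cst.
apply: pos_part_le => // g [_ hg].
have -> : g = (fun _ => 0) by apply/funext => x; apply/eqP; rewrite eq_le andbC.
by rewrite mu_const.
Qed.

Lemma pos_part_const (d : R) : 0 <= d ->
  pos_part (fun _ => d) = d * pos_part (fun _ => 1).
Proof.
rewrite le_eqVlt => /orP[/eqP <-|d0]; first by rewrite pos_part0 mul0r.
rewrite -pos_partZ //; last by split => //; exact: bounded_cst.
by congr pos_part; apply/funext => x; rewrite mulr1.
Qed.

Lemma pos_part_translate (g : G) f : nonneg_bounded f ->
  pos_part (fun h => f (g^-1 * h)%g) = pos_part f.
Proof.
have le (a : G) u : nonneg_bounded u -> pos_part (fun h => u (a^-1 * h)%g) <= pos_part u.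
  case=> bu pu; apply: pos_part_le => [x|v [bv hv]]; first exact: pu.
  rewrite -(mu_inv a^-1) ?invgK; last exact: bounded_comp.
  apply: pos_part_ub => //; split => [|x]; first exact: bounded_comp.
  by have := hv (a * x)%g; rewrite mulKg.
move=> nf; apply/eqP; rewrite eq_le le //=.
have nft : nonneg_bounded (fun h => f (g^-1 * h)%g).
  by case: nf => bf pf; split => //; exact: bounded_comp.
by have := le g^-1%g _ nft; under eq_fun do rewrite invgK mulKg.
Qed.

(* a bound for |f| when f is bounded, used to shift f to a nonnegative function *)
Definition bound_of (f : G -> R) : R :=
  if pselect (bounded_fun f) is left hf then `|sval (cid hf)| else 0.

Lemma bound_of_shift f : bounded_fun f -> forall x, 0 <= f x + bound_of f.
Proof.
rewrite /bound_of; case: pselect => // hf _ x; case: (cid hf) => C hC /=.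
by have := ler_norm C; have := hC x; rewrite ler_norml => /andP[]; lra.
Qed.

Local Notation pos1 := (pos_part (fun _ => 1)).

(* mu^+ 1 >= mu 1 = 1 *)

Lemma pos1_gt0 : 0 < pos1.
Proof.
apply: lt_le_trans ltr01 _; rewrite -[X in X <= _](mu_const 1).
apply: pos_part_ub; first exact: bounded_cst.
by split => [|x]; [exact: bounded_cst | rewrite ler01 lexx].
Qed.

(* the linear extension f |-> mu^+ (f + c) - c mu^+ 1, for any shift c
   making f + c nonnegative *)
Definition pos_ext (f : G -> R) :=
  pos_part (fun x => f x + bound_of f) - bound_of f * pos1.

Lemma pos_ext_shift f c : bounded_fun f -> (forall x, 0 <= f x + c) ->
  pos_ext f = pos_part (fun x => f x + c) - c * pos1.
Proof.
move=> bf hc; have hb := bound_of_shift bf.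
(* shifting further by d >= 0 adds d mu^+ 1 *)
have shift c0 d : (forall x, 0 <= f x + c0) -> 0 <= d ->
    pos_part (fun x => f x + (c0 + d)) = pos_part (fun x => f x + c0) + d * pos1.
  move=> hc0 hd; rewrite -pos_part_const // -pos_partD.
  - by congr pos_part; apply/funext => x; rewrite addrA.
  - exact: nonneg_bounded_shift.
  - by split => //; exact: bounded_cst.
rewrite /pos_ext; have [le|/ltW le] := leP c (bound_of f).
  have := shift c (bound_of f - c) hc; rewrite subr_ge0 addrC subrK => ->; first ring.
  exact: le.
have := shift (bound_of f) (c - bound_of f) hb; rewrite subr_ge0 addrC subrK => ->; first ring.
exact: le.
Qed.

Lemma pos_ext_plin (a : R) f f' : 0 <= a -> bounded_fun f -> bounded_fun f' ->
  pos_ext (fun x => a * f x + f' x) = a * pos_ext f + pos_ext f'.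
Proof.
rewrite le_eqVlt => /orP[/eqP <- _ _|a0 bf bf'].
  by rewrite mul0r add0r; congr pos_ext; apply/funext => x; rewrite mul0r add0r.
have hb := bound_of_shift bf; have hb' := bound_of_shift bf'.
set c := a * bound_of f + bound_of f'.
have split_shift x : a * f x + f' x + c = a * (f x + bound_of f) + (f' x + bound_of f').
  by rewrite /c; ring.
have hc x : 0 <= a * f x + f' x + c.
  by rewrite split_shift addr_ge0 ?mulr_ge0 ?(ltW a0).
rewrite (pos_ext_shift (bounded_lin a bf bf') hc).
under eq_fun do rewrite split_shift.
rewrite pos_partD ?pos_partZ //; try exact: nonneg_bounded_shift.
  by rewrite /pos_ext /c; ring.
by apply: nonneg_boundedZ (ltW a0) _; exact: nonneg_bounded_shift.
Qed.

Lemma pos_ext_const k : pos_ext (fun _ => k) = k * pos1.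
Proof.
have hk (x : G) : 0 <= k + `|k| by have := ler_norm (- k); rewrite normrN; lra.
rewrite (pos_ext_shift (bounded_cst _ k) hk) pos_part_const; last exact: hk 1%g.
ring.
Qed.

Lemma pos_ext_linear (a : R) f f' : bounded_fun f -> bounded_fun f' ->
  pos_ext (fun x => a * f x + f' x) = a * pos_ext f + pos_ext f'.
Proof.
move=> bf bf'; have [a0|a0] := leP 0 a; first exact: pos_ext_plin.
have pos_extN : pos_ext (fun x => - f x) = - pos_ext f.
  have := pos_ext_plin ler01 bf (boundedN bf).
  under eq_fun do rewrite mul1r subrr.
  by rewrite pos_ext_const mul0r mul1r => /eqP; rewrite eq_sym addrC addr_eq0 => /eqP.
have -> : (fun x => a * f x + f' x) = (fun x => (- a) * (- f x) + f' x).
  by apply/funext => x; rewrite mulrNN.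
by rewrite pos_ext_plin ?oppr_ge0 ?(ltW a0) ?pos_extN ?mulrNN //; exact: boundedN.
Qed.

Lemma pos_ext_pos f : bounded_fun f -> (forall x, 0 <= f x) -> 0 <= pos_ext f.
Proof.
move=> bf pf; have hf0 x : 0 <= f x + 0 by rewrite addr0.
rewrite (pos_ext_shift bf hf0) mul0r subr0; apply: pos_part_ge0.
exact: nonneg_bounded_shift.
Qed.

Lemma pos_ext_translate (g : G) f : bounded_fun f ->
  pos_ext (fun h => f (g^-1 * h)%g) = pos_ext f.
Proof.
move=> bf; have hb := bound_of_shift bf.
have hbt x : 0 <= f (g^-1 * x)%g + bound_of f by exact: hb.
rewrite (pos_ext_shift (bounded_comp _ bf) hbt).
by rewrite (pos_part_translate g (nonneg_bounded_shift bf hb)).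
Qed.

Lemma amenable_of_invariant_functional : amenable R G.
Proof.
have pos1_neq0 : pos1 != 0 by rewrite gt_eqF // pos1_gt0.
exists (fun f => pos_ext f / pos1); split.
- by move=> a f f' bf bf'; rewrite pos_ext_linear // mulrDl mulrA.
- by move=> c; rewrite pos_ext_const mulfK.
- by move=> f bf pf; rewrite divr_ge0 ?pos_ext_pos ?ltW ?pos1_gt0.
- by move=> g f bf; rewrite pos_ext_translate.
Qed.
End PositivePart.

Lemma injective1_amenable (R : realType) (G : groupType) :
  dual_comparison_injective (@translate R G) 1 -> amenable R G.
Proof.
move=> /evaluation_coboundary [v v_dual v_primitive].
have [K mu_bounded] := invariant_functional_bounded v_dual.
apply: (amenable_of_invariant_functional _ _ _ mu_bounded).
- exact: invariant_functional_linear.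
- exact: invariant_functional_const.
- exact: invariant_functional_inv.
Qed.

Unset Implicit Arguments.
Close Scope ring_scope.

Theorem mainTheorem1 (R : realType) (G : groupType) :
  (amenable R G <->
   (forall (W : normedModType R) (rho : G -> W -> W),
      isometric_linear_action rho -> dual_comparison_injective rho 1))
  /\
  ((forall (W : normedModType R) (rho : G -> W -> W),
      isometric_linear_action rho -> dual_comparison_injective rho 1) <->
   (forall (W : normedModType R) (rho : G -> W -> W),
      isometric_linear_action rho ->
      forall k : nat, dual_comparison_injective rho k)).
Proof.
have inj1_amenable : (forall (W : normedModType R) (rho : G -> W -> W),
    isometric_linear_action rho -> dual_comparison_injective rho 1) -> amenable R G.
  by move=> inj1; apply: injective1_amenable; apply: inj1; exact: translate_isometric.
split; split.
- by move=> amen W rho _; exact: amenable_comparison_injective.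
- exact: inj1_amenable.
- by move=> inj1 W rho _; apply: amenable_comparison_injective; exact: inj1_amenable.
- by move=> injk W rho hrho; exact: injk.
Qed.
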